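(* Let $M$ be a $po$-$\Gamma$-semigroup. The following are equivalent: (1) $M$ is completely regular. (2) $B(a)=B(a\Gamma a)=B(a\Gamma a\Gamma M\Gamma a\Gamma a)$ for every $a\in M$. (3) $B(a)=B(a\Gamma a)$ for every $a\in M$.
   Context: A $po$-$\Gamma$-semigroup is a triple $(M,\Gamma,\le)$ where $M,\Gamma$ are nonempty sets with a map $M\times\Gamma\times M\to M$, $(a,\gamma,b)\mapsto a\gamma b$, satisfying $(a\gamma b)\mu c=a\gamma(b\mu c)$ for all $a,b,c\in M$, $\gamma,\mu\in\Gamma$, and $\le$ is a partial order on $M$ such that $a\le b$ implies $a\gamma c\le b\gamma c$ and $c\gamma a\le c\gamma b$ for all $c\in M$, $\gamma\in\Gamma$. For $A,B\subseteq M$, $A\Gamma B=\{a\gamma b: a\in A,\gamma\in\Gamma,b\in B\}$ (with $a\Gamma B$ meaning $\{a\}\Gamma B$, etc.), and $(A]=\{t\in M: t\le a \text{ for some } a\in A\}$. $M$ is regular if $a\in(a\Gamma M\Gamma a]$ for all $a\in M$; left regular if $a\in(M\Gamma a\Gamma a]$ for all $a\in M$; right regular if $a\in(a\Gamma a\Gamma M]$ for all $a\in M$; completely regular if it is regular, left regular and right regular. A bi-ideal of $M$ is a nonempty subset $B\subseteq M$ such that $B\Gamma M\Gamma B\subseteq B$ and, whenever $a\in B$, $b\in M$ and $b\le a$, then $b\in B$. For a nonempty subset $A\subseteq M$, $B(A)$ denotes the bi-ideal of $M$ generated by $A$ (the smallest bi-ideal containing $A$), and $B(A)=(A\cup A\Gamma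 M\Gamma A]$; $B(a)$ means $B(\{a\})=(\{a\}\cup a\Gamma M\Gamma a]$. *)

Record poGammaSemigroup := {
  carrier :> Type;
  gam : Type;
  op : carrier -> gam -> carrier -> carrier;
  le : carrier -> carrier -> Prop;
  carrier_ne : inhabited carrier;
  gam_ne : inhabited gam;
  op_assoc : forall (a b c : carrier) (g m : gam),
      op (op a g b) m c = op a g (op b m c);
  le_refl : forall a, le a a;
  le_antisym : forall a b, le a b -> le b a -> a = b;
  le_trans : forall a b c, le a b -> le b c -> le a c;
  le_opr : forall a b c g, le a b -> le (op a g c) (op b g c);
  le_opl : forall a b c g, le a b -> le (op c g a) (op c g b)
}.

Section Defs.
Variable M : poGammaSemigroup.

Definition subset (A B : M -> Prop) : Prop := forall x, A x -> B x.
Definition set_eq (A B : M -> Prop) : Prop := forall x, A x <-> B x.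
Definition full : M -> Prop := fun _ => True.
Definition single (a : M) : M -> Prop := fun x => x = a.

Definition gprod (A B : M -> Prop) : M -> Prop :=
  fun x => exists a g b, A a /\ B b /\ x = op M a g b.

Definition down (A : M -> Prop) : M -> Prop :=
  fun t => exists a, A a /\ le M t a.

Definition regular : Prop :=
  forall a : M, down (gprod (gprod (single a) full) (single a)) a.
Definition left_regular : Prop :=
  forall a : M, down (gprod (gprod full (single a)) (single a)) a.
Definition right_regular : Prop :=
  forall a : M, down (gprod (gprod (single a) (single a)) full) a.
Definition completely_regular : Prop :=
  regular /\ left_regular /\ right_regular.

Definition bi_ideal (B : M -> Prop) : Prop :=
  (exists x, B x) /\
  subset (gprod (gprod B full) B) B /\
  (forall a b : M, B a -> le M b a -> B b).

Definition bi_gen (A : M -> Prop) : M -> Prop :=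
  fun x => forall B, bi_ideal B -> subset A B -> B x.

End Defs.


(* For nonempty A, the bi-ideal generated by A is (A ∪ AΓMΓA].  Complete
   regularity is equivalent to: every a lies below some t in aΓaΓMΓaΓa.
   Indeed, inserting the right and left regularity witnesses for a into the two
   outer copies of a in a ≤ aμzνa produces such a t; conversely such a t lies in
   aΓMΓa, MΓaΓa and aΓaΓM at once.  Given t, we get a ∈ B(aΓaΓMΓaΓa) ⊆ B(aΓa)
   ⊆ B(a), the last inclusion because aγa ≤ tγa ∈ aΓMΓa; so the three
   bi-ideals coincide.  Conversely a ∈ B(aΓa) = (aΓa ∪ aΓaΓMΓaΓa] puts a below
   an element of the sandwich, or below aγa, and then a ≤ aγaγaγaγa. *)

Section BiIdealGenerated.
Variable M : poGammaSemigroup.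
Implicit Types (A C : M -> Prop) (a x y t : M).

Lemma le_op2 x x' y y' g :
  le M x x' -> le M y y' -> le M (op M x g y) (op M x' g y').
Proof.
  intros Hx Hy. apply le_trans with (op M x' g y); [apply le_opr | apply le_opl]; assumption.
Qed.

Lemma gprod3_intro (X Y Z : M -> Prop) x y z g g' t :
  X x -> Y y -> Z z -> t = op M (op M x g y) g' z -> gprod M (gprod M X Y) Z t.
Proof. intros Hx Hy Hz ->. exists (op M x g y), g', z. split; [exists x, g, y|]; auto. Qed.

Arguments gprod3_intro {X Y Z} x y z g g' {t}.

Lemma bi_gen_incl A : subset M A (bi_gen M A).
Proof. intros x Hx B _ HAB. exact (HAB x Hx). Qed.

Lemma bi_gen_least A C : subset M A (bi_gen M C) -> subset M (bi_gen M A) (bi_gen M C).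
Proof. intros H x Hx B HB HCB. apply Hx; [exact HB|]. intros y Hy. exact (H y Hy B HB HCB). Qed.

Lemma bi_gen_down_closed A x y : bi_gen M A y -> le M x y -> bi_gen M A x.
Proof. intros Hy Hxy B HB HAB. apply (proj2 (proj2 HB)) with y; [apply Hy|]; assumption. Qed.

Lemma bi_gen_prod A : subset M (gprod M (gprod M A (full M)) A) (bi_gen M A).
Proof.
  intros x (p & g' & b & (a & g & m & Ha & _ & ->) & Hb & ->) B (_ & HB & _) HAB.
  apply HB, (gprod3_intro a m b g g'); [apply HAB, Ha | exact I | apply HAB, Hb | reflexivity].
Qed.

Definition bi_base A x : Prop := A x \/ gprod M (gprod M A (full M)) A x.

Definition bi_hull A : M -> Prop := down M (bi_base A).

Lemma bi_base_factor_left A x : bi_base A x ->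
  exists a, A a /\ forall g m, exists h n, op M x g m = op M a h n.
Proof.
  intros [Hx | (p & h2 & a2 & (a & h1 & m1 & Ha & _ & ->) & _ & ->)].
  - exists x. split; [exact Hx|]. intros g m. exists g, m. reflexivity.
  - exists a. split; [exact Ha|]. intros g m. exists h1, (op M (op M m1 h2 a2) g m).
    rewrite !op_assoc. reflexivity.
Qed.

Lemma bi_base_factor_right A y : bi_base A y ->
  exists b, A b /\ forall m g, exists n h, op M m g y = op M n h b.
Proof.
  intros [Hy | (p & h2 & b & (a1 & h1 & m1 & _ & _ & ->) & Hb & ->)].
  - exists y. split; [exact Hy|]. intros m g. exists m, g. reflexivity.
  - exists b. split; [exact Hb|]. intros m g. exists (op M (op M m g a1) h1 m1), h2.
    rewrite !op_assoc. reflexivity.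
Qed.

Lemma bi_base_prod A x y g m g' : bi_base A x -> bi_base A y ->
  gprod M (gprod M A (full M)) A (op M (op M x g m) g' y).
Proof.
  intros Hx Hy.
  destruct (bi_base_factor_left _ _ Hx) as (a & Ha & Hxa).
  destruct (bi_base_factor_right _ _ Hy) as (b & Hb & Hyb).
  destruct (Hxa g m) as (h & n & ->).
  destruct (Hyb n g') as (n' & h' & Hn).
  apply (gprod3_intro a n' b h h'); [exact Ha | exact I | exact Hb |].
  rewrite op_assoc, Hn, op_assoc. reflexivity.
Qed.

Lemma bi_hull_bi_ideal A : (exists a, A a) -> bi_ideal M (bi_hull A).
Proof.
  intros (a & Ha). split; [|split].
  - exists a, a. split; [left; exact Ha | apply le_refl].
  - intros z (p & g' & y' & (x' & g & m & (x & Hx & Hx') & _ & ->) & (y & Hy & Hy') & ->).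
    exists (op M (op M x g m) g' y). split.
    + right. apply bi_base_prod; assumption.
    + apply le_op2; [apply le_opr|]; assumption.
  - intros u v (t & Ht & Hut) Hvu. exists t. split; [exact Ht|].
    apply le_trans with u; assumption.
Qed.

Lemma bi_gen_sub_bi_hull A : (exists a, A a) -> subset M (bi_gen M A) (bi_hull A).
Proof.
  intros HA x Hx. apply Hx; [apply bi_hull_bi_ideal, HA|].
  intros y Hy. exists y. split; [left; exact Hy | apply le_refl].
Qed.

Definition square a : M -> Prop := gprod M (single M a) (single M a).

Definition square_sandwich a : M -> Prop :=
  gprod M (gprod M (gprod M (square a) (full M)) (single M a)) (single M a).

Lemma square_sandwich_intro a g h m h' k :
  square_sandwich a (op M (op M (op M (op M a g a) h m) h' a) k a).
Proof.
  apply (gprod3_intro (op M (op M a g a) h m) a a h' k); try reflexivity.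
  exists (op M a g a), h, m. split; [exists a, g, a|]; repeat split.
Qed.

Lemma square_sandwich_inv a t : square_sandwich a t ->
  exists g h m h' k, t = op M (op M (op M (op M a g a) h m) h' a) k a.
Proof.
  intros (p & k & b & (q & h' & c & (s & h & m & (a1 & g & a2 & -> & -> & ->) & _ & ->)
    & -> & ->) & -> & ->).
  exists g, h, m, h', k. reflexivity.
Qed.

Lemma completely_regular_le_sandwich :
  completely_regular M -> forall a, exists t, square_sandwich a t /\ le M a t.
Proof.
  intros (Hreg & Hleft & Hright) a.
  destruct (Hreg a) as (t1 & (p1 & nu & b1 & (a1 & mu & z & -> & _ & ->) & -> & ->) & H1).
  destruct (Hleft a) as (t2 & (p2 & be & b2 & (y & al & a2 & _ & -> & ->) & -> & ->) & H2).
  destruct (Hright a) as (t3 & (p3 & de & x & (a3 & ga & a4 & -> & -> & ->) & _ & ->) & H3).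
  exists (op M (op M (op M (op M a ga a) de (op M (op M x mu z) nu y)) al a) be a).
  split; [apply square_sandwich_intro|].
  apply le_trans with (op M (op M a mu z) nu a); [exact H1|].
  replace (op M (op M (op M (op M a ga a) de (op M (op M x mu z) nu y)) al a) be a)
    with (op M (op M (op M (op M a ga a) de x) mu z) nu (op M (op M y al a) be a))
    by (rewrite !op_assoc; reflexivity).
  apply le_op2; [apply le_opr|]; assumption.
Qed.

Lemma completely_regular_of_le_sandwich :
  (forall a, exists t, square_sandwich a t /\ le M a t) -> completely_regular M.
Proof.
  intros H. split; [|split]; intro a; destruct (H a) as (t & Ht & Hat);
    destruct (square_sandwich_inv _ _ Ht) as (g & h & m & h' & k & ->);
    eexists; (split; [|exact Hat]).
  - apply (gprod3_intro a (op M (op M a h m) h' a) a g k);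
      [reflexivity | exact I | reflexivity | rewrite !op_assoc; reflexivity].
  - apply (gprod3_intro (op M (op M a g a) h m) a a h' k);
      [exact I | reflexivity | reflexivity | reflexivity].
  - apply (gprod3_intro a a (op M m h' (op M a k a)) g h);
      [reflexivity | reflexivity | exact I | rewrite !op_assoc; reflexivity].
Qed.

Lemma bi_gen_square_eq_of_le_sandwich a t : square_sandwich a t -> le M a t ->
  set_eq M (bi_gen M (single M a)) (bi_gen M (square a)) /\
  set_eq M (bi_gen M (square a)) (bi_gen M (square_sandwich a)).
Proof.
  intros Ht Hat.
  assert (Hsingle : subset M (bi_gen M (single M a)) (bi_gen M (square_sandwich a))).
  { apply bi_gen_least. intros u ->.
    apply bi_gen_down_closed with t; [apply bi_gen_incl, Ht | exact Hat]. }
  assert (Hsandwich : subset M (bi_gen M (square_sandwich a)) (bi_gen M (square a))).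
  { apply bi_gen_least. intros u Hu. apply bi_gen_prod.
    destruct (square_sandwich_inv _ _ Hu) as (g & h & m & h' & k & ->).
    apply (gprod3_intro (op M a g a) m (op M a k a) h h');
      [exists a, g, a; repeat split | exact I | exists a, k, a; repeat split | rewrite !op_assoc; reflexivity]. }
  assert (Hsquare : subset M (bi_gen M (square a)) (bi_gen M (single M a))).
  { apply bi_gen_least. intros u (a1 & g0 & a2 & -> & -> & ->).
    destruct (square_sandwich_inv _ _ Ht) as (g & h & m & h' & k & Et).
    apply bi_gen_down_closed with (op M t g0 a); [|apply le_opr, Hat].
    apply bi_gen_prod, (gprod3_intro a (op M (op M (op M a h m) h' a) k a) a g g0);
      [reflexivity | exact I | reflexivity | rewrite Et, !op_assoc; reflexivity]. }
  split; intro x; split; auto.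
Qed.

Lemma le_sandwich_of_bi_gen_square a :
  set_eq M (bi_gen M (single M a)) (bi_gen M (square a)) ->
  exists t, square_sandwich a t /\ le M a t.
Proof.
  intros E. destruct (gam_ne M) as [g0].
  assert (Ha : bi_hull (square a) a).
  { apply bi_gen_sub_bi_hull; [exists (op M a g0 a), a, g0, a; repeat split|].
    apply (proj1 (E a)), bi_gen_incl. reflexivity. }
  destruct Ha as (t & [(a1 & g & a2 & -> & -> & ->)
    | (p & h' & q & (s & h & m & (a1 & g & a2 & -> & -> & ->) & _ & ->)
       & (a3 & k & a4 & -> & -> & ->) & ->)] & Hat).
  - exists (op M (op M (op M (op M a g a) g a) g a) g a).
    split; [apply square_sandwich_intro|].
    (* a ≤ aγa propagates along the powers: a ≤ a² ≤ a³ ≤ a⁴ ≤ a⁵ *)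
    pose proof (le_opr M _ _ a g Hat) as H2.
    pose proof (le_opr M _ _ a g H2) as H3.
    pose proof (le_opr M _ _ a g H3) as H4.
    eapply le_trans; [exact Hat|]. eapply le_trans; [exact H2|].
    eapply le_trans; [exact H3|]. exact H4.
  - exists (op M (op M (op M (op M a g a) h m) h' a) k a).
    split; [apply square_sandwich_intro|].
    rewrite !op_assoc in Hat. rewrite !op_assoc. exact Hat.
Qed.

End BiIdealGenerated.

Theorem proposition5 (M : poGammaSemigroup) :
  let aGa := fun a : M => gprod M (single M a) (single M a) in
  (completely_regular M <->
     (forall a : M,
        set_eq M (bi_gen M (single M a)) (bi_gen M (aGa a)) /\
        set_eq M (bi_gen M (aGa a))
          (bi_gen M (gprod M (gprod M (gprod M (aGa a) (full M)) (single M a))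
                       (single M a)))))
  /\
  (completely_regular M <->
     (forall a : M, set_eq M (bi_gen M (single M a)) (bi_gen M (aGa a)))).
Proof.
  intros aGa. split; split.
  - intros Hcr a. destruct (completely_regular_le_sandwich M Hcr a) as (t & Ht & Hat).
    exact (bi_gen_square_eq_of_le_sandwich M _ _ Ht Hat).
  - intros H. apply completely_regular_of_le_sandwich. intro a.
    apply le_sandwich_of_bi_gen_square, (proj1 (H a)).
  - intros Hcr a. destruct (completely_regular_le_sandwich M Hcr a) as (t & Ht & Hat).
    exact (proj1 (bi_gen_square_eq_of_le_sandwich M _ _ Ht Hat)).
  - intros H. apply completely_regular_of_le_sandwich. intro a.
    apply le_sandwich_of_bi_gen_square, H.
Qed.
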